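(* Let $\mathcal{H}$ be a complex separable Hilbert space and $\mathcal{E}(\mathcal{H})$ its set of effects. For $A\in\mathcal{E}(\mathcal{H})$, with $A'=I-A$, put $$X(A):=2\|A\|\,\|A'\|-\bigl(\|A\|+\|A'\|-1\bigr),$$ $$Y(A):=2\bigl(\|A\|\,\|A'\|-\|AA'\|\bigr)-\Bigl[\bigl(\|A\|+\|A'\|-1\bigr)-\bigl(\|AA'\|+\|I-AA'\|-1\bigr)\Bigr],$$ and $$\mathcal{S}_2(A):=X(A)-\sqrt{X(A)^2-Y(A)}.$$ Then $\mathcal{S}_2$ is a well-defined real-valued function on $\mathcal{E}(\mathcal{H})$ and is a sharpness measure.
   Context: An effect is a selfadjoint bounded operator $A$ on $\mathcal{H}$ with $\mathbb{O}\le A\le I$. An effect is trivial if $A=\lambda I$, $\lambda\in[0,1]$; a nontrivial projection is a projection other than $\mathbb{O},I$. Norms are operator norms. A function $\mathcal{S}:\mathcal{E}(\mathcal{H})\to\mathbb{R}$ is a sharpness measure if: (S1) $0\le\mathcal{S}(A)\le1$; (S2) $\mathcal{S}(A)=0$ iff $A$ is trivial; (S3) $\mathcal{S}(A)=1$ iff $A$ is a nontrivial projection; (S4) $\mathcal{S}(A')=\mathcal{S}(A)$; (S5) $\mathcal{S}(CAC^{-1})=\mathcal{S}(A)$ for every invertible bounded $C$ such that $CAC^{-1}$ is an effect; (S6) $A\mapsto\mathcal{S}(A)$ is operator-norm continuous. *)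

From HB Require Import structures.
From mathcomp Require Import all_boot all_order all_algebra.
From mathcomp Require Import complex.
From mathcomp Require Import reals classical_sets.
Set Implicit Arguments. Unset Strict Implicit. Unset Printing Implicit Defensive.
Import Order.TTheory GRing.Theory Num.Theory.
Local Open Scope ring_scope.
Local Open Scope classical_set_scope.

Section Hilbert.
Variables (R : realType) (H : lmodType R[i]) (ip : H -> H -> R[i]).

Definition hnorm (x : H) : R := Num.sqrt (complex.Re (ip x x)).

Definition inner_product : Prop :=
  [/\ (forall a x y z, ip (a *: x + y) z = a * ip x z + ip y z),
      (forall x y, ip y x = Num.conj (ip x y)),
      (forall x, 0 <= ip x x) &
      (forall x, ip x x = 0 -> x = 0)].

Definition complete : Prop :=
  forall u : nat -> H,
    (forall e : R, 0 < e -> exists N : nat, forall m n : nat,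
        (N <= m)%N -> (N <= n)%N -> hnorm (u m - u n) < e) ->
    exists l : H, forall e : R, 0 < e -> exists N : nat, forall n : nat,
        (N <= n)%N -> hnorm (u n - l) < e.

Definition separable : Prop :=
  exists d : nat -> H, forall (x : H) (e : R), 0 < e -> exists n : nat, hnorm (x - d n) < e.

Definition separable_hilbert : Prop := [/\ inner_product, complete & separable].

Definition is_linear_op (T : H -> H) : Prop :=
  forall (a : R[i]) (x y : H), T (a *: x + y) = a *: T x + T y.

Definition bounded_op (T : H -> H) : Prop :=
  is_linear_op T /\ exists M : R, forall x, hnorm (T x) <= M * hnorm x.

Definition opnorm (T : H -> H) : R :=
  sup [set hnorm (T x) | x in [set x : H | hnorm x <= 1]].

Definition selfadjoint (A : H -> H) : Prop :=
  forall x y, ip (A x) y = ip x (A y).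

Definition effect (A : H -> H) : Prop :=
  [/\ bounded_op A, selfadjoint A & forall x, 0 <= ip (A x) x <= ip x x].

Definition idop : H -> H := fun x => x.
Definition zeroop : H -> H := fun _ => 0.
Definition compl (A : H -> H) : H -> H := fun x => x - A x.
Definition opmul (A B : H -> H) : H -> H := fun x => A (B x).
Definition opsub (A B : H -> H) : H -> H := fun x => A x - B x.

Definition trivial_effect (A : H -> H) : Prop :=
  exists l : R, 0 <= l <= 1 /\ forall x, A x = (l%:C)%C *: x.

Definition nontrivial_projection (A : H -> H) : Prop :=
  (forall x, A (A x) = A x) /\ (exists x, A x <> 0) /\ (exists x, A x <> x).

Definition invertible_bounded (C : H -> H) (D : H -> H) : Prop :=
  [/\ bounded_op C, bounded_op D, (forall x, C (D x) = x) & (forall x, D (C x) = x)].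

Definition sharpness_measure (S : (H -> H) -> R) : Prop :=
  [/\ (forall A, effect A -> 0 <= S A <= 1),
      (forall A, effect A -> (S A = 0 <-> trivial_effect A)),
      (forall A, effect A -> (S A = 1 <-> nontrivial_projection A)),
      (forall A, effect A -> S (compl A) = S A) &
      ((forall A C D, effect A -> invertible_bounded C D ->
          effect (opmul C (opmul A D)) -> S (opmul C (opmul A D)) = S A) /\
      (forall A, effect A -> forall e : R, 0 < e -> exists2 d : R, 0 < d &
          forall B, effect B -> opnorm (opsub B A) < d -> `|S B - S A| < e))].

Definition Xq (A : H -> H) : R :=
  2 * opnorm A * opnorm (compl A) - (opnorm A + opnorm (compl A) - 1).

Definition Yq (A : H -> H) : R :=
  2 * (opnorm A * opnorm (compl A) - opnorm (opmul A (compl A)))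
  - ((opnorm A + opnorm (compl A) - 1)
     - (opnorm (opmul A (compl A)) + opnorm (compl (opmul A (compl A))) - 1)).

Definition S2 (A : H -> H) : R := Xq A - Num.sqrt (Xq A ^+ 2 - Yq A).

End Hilbert.

(* For an effect A let m and M be the least and greatest points of its spectrum,
   a subset of [0, 1].  Then ||A|| = M, ||A'|| = 1 - m, and ||AA'||, ||I - AA'||
   are the maximum of t - t^2 and one minus its minimum over the spectrum.  So
   S2(A) is an explicit function of four real numbers constrained by the shape
   of the parabola t - t^2 on [m, M]; elementary real algebra then shows that
   X^2 - Y >= 0, that S2 lies in [0, 1], vanishes iff m = M (A is trivial) and
   equals 1 iff m = 0, M = 1 and t - t^2 vanishes on the spectrum (A is a
   nontrivial projection).  Similarity preserves the spectrum, hence S2; each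
   of the four norms is Lipschitz in A and S2 is 1/2-Hölder in them, whence
   continuity.  Spectral points are handled as approximate eigenvalues, which
   suffices because the norm of a positive operator is an approximate
   eigenvalue of it. *)

From HB Require Import structures.
From mathcomp Require Import all_boot all_order all_algebra.
From mathcomp Require Import complex.
From mathcomp Require Import reals classical_sets.
From mathcomp Require Import ring lra.
From Stdlib Require Import Classical FunctionalExtensionality.
Import Order.TTheory GRing.Theory Num.Theory.
Local Open Scope ring_scope.
Local Open Scope classical_set_scope.
Set Implicit Arguments. Unset Strict Implicit. Unset Printing Implicit Defensive.

(** * Real inequalities *)

Section ScalarBounds.
Variable R : realType.
Implicit Types m M lb lw b c : R.

Lemma sqrtr_le_sqr (a x : R) : 0 <= x -> (Num.sqrt a <= x) = (a <= x ^+ 2).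
Proof.
move=> hu; have [ha|ha] := leP 0 a.
  by rewrite -{1}(ger0_norm hu) -sqrtr_sqr ler_sqrt ?sqr_ge0.
rewrite ltr0_sqrtr // hu; apply/esym; apply: le_trans (ltW ha) _; exact: sqr_ge0.
Qed.

Lemma parabola_ge_endpoint m M l : m <= l <= M -> (m - m ^+ 2 <= l - l ^+ 2) \/ (M - M ^+ 2 <= l - l ^+ 2).
Proof.
move=> /andP[h1 h2]; have [h|h] := leP (l + m) 1.
  by left; nra.
by right; nra.
Qed.

Lemma parabola_mix_le m M lw b c : 0 <= m -> m <= M -> M <= 1 -> m <= lw <= M ->
  c = lw - lw ^+ 2 -> M - M ^+ 2 <= b -> m - m ^+ 2 <= b ->
  (M * (1 - m) + (1 - M) * m) * (1 - (M * (1 - m) + (1 - M) * m)) <= b + c.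
Proof.
move=> h0 h1 h2 hlw ec hb1 hb2.
set X := M * (1 - m) + (1 - M) * m.
have key : X * (1 - X) <= (m - m ^+ 2) + (M - M ^+ 2).
  have hp : 0 <= (M - M ^+ 2) * (m - m ^+ 2) by apply: mulr_ge0; nra.
  rewrite /X; nra.
case: (parabola_ge_endpoint hlw) => h; rewrite -ec in h; lra.
Qed.

Lemma parabola_gap_ge m M lb b c : 0 <= m -> m <= M -> M <= 1 -> m <= lb <= M ->
  b = lb - lb ^+ 2 -> c <= M - M ^+ 2 -> c <= m - m ^+ 2 ->
  (M - m) ^+ 2 / 4 <= (M * (1 - m) + (1 - M) * m) - (b + c).
Proof.
move=> h0 h1 h2 /andP[l1 l2] eb hc1 hc2.
have [hM|hM] := leP M (1/2).
  have : b <= M - M ^+ 2.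
    rewrite eb; have : 0 <= (M - lb) * (1 - M - lb) by apply: mulr_ge0; lra.
    nra.
  nra.
have [hm|hm] := leP (1/2) m.
  have : b <= m - m ^+ 2.
    rewrite eb; have : 0 <= (lb - m) * (lb + m - 1) by apply: mulr_ge0; lra.
    nra.
  nra.
have hb : b <= 1/4 by rewrite eb; have := sqr_ge0 (lb - 1/2); nra.
have hpq : 0 <= (M - 1/2) * (1/2 - m) by apply: mulr_ge0; lra.
have [hs|hs] := leP (M + m) 1.
  have : (M - m) ^+ 2 <= 4 * (1/2 - m) ^+ 2 by nra.
  nra.
have : (M - m) ^+ 2 <= 4 * (M - 1/2) ^+ 2 by nra.
nra.
Qed.

Definition Xval (u v : R) := 2 * u * v - (u + v - 1).
Definition Yval (u v b w : R) := 2 * (u * v - b) - ((u + v - 1) - (b + w - 1)).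
Definition Dval (u v b w : R) := Xval u v ^+ 2 - Yval u v b w.
Definition Sval (u v b w : R) := Xval u v - Num.sqrt (Xval u v ^+ 2 - Yval u v b w).

(* The constraints satisfied by u = ||A||, v = ||A'||, b = ||AA'||,
   w = ||I - AA'||: the spectrum lies in [1 - v, u] and contains both ends,
   lb and lw are spectral points where t - t^2 attains its maximum b and its
   minimum 1 - w. *)
Definition spectral_norms (u v b w : R) := exists lb lw,
  [/\ 0 <= 1 - v, 1 - v <= u, u <= 1, 1 - v <= lb <= u & 1 - v <= lw <= u] /\
  [/\ b = lb - lb ^+ 2, w = 1 - (lw - lw ^+ 2), u - u ^+ 2 <= b, (1 - v) - (1 - v) ^+ 2 <= b &
      (1 - (u - u ^+ 2) <= w /\ 1 - ((1 - v) - (1 - v) ^+ 2) <= w)].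

Section SpectralNorms.
Variables u v b w : R.
Hypothesis hS : spectral_norms u v b w.

Lemma Dval_ge0 : 0 <= Dval u v b w.
Proof.
case: hS => lb [lw [[h0 h1 h2 hlb hlw] [eb ew hb1 hb2 [hw1 hw2]]]].
have := parabola_mix_le (m := 1 - v) (M := u) (lw := lw) (b := b) (c := 1 - w) h0 h1 h2 hlw.
rewrite ew subKr => /(_ erefl hb1 hb2).
rewrite /Dval /Yval /Xval -ew; nra.
Qed.

Lemma Xval_gap_ge : (u - (1 - v)) ^+ 2 / 4 <= Xval u v - (b + (1 - w)).
Proof.
case: hS => lb [lw [[h0 h1 h2 hlb hlw] [eb ew hb1 hb2 [hw1 hw2]]]].
have := parabola_gap_ge (m := 1 - v) (M := u) (lb := lb) (b := b) (c := 1 - w) h0 h1 h2 hlb eb.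
rewrite /Xval; move=> h; have : (1 - w) <= u - u ^+ 2 by lra.
have : (1 - w) <= (1 - v) - (1 - v) ^+ 2 by lra.
move=> a1 a2; have := h a2 a1; nra.
Qed.

Lemma Xval_in01 : 0 <= Xval u v <= 1.
Proof.
case: hS => lb [lw [[h0 h1 h2 hlb hlw] _]].
have p1 : 0 <= u * v by apply: mulr_ge0; lra.
have p2 : 0 <= (1 - u) * (1 - v) by apply: mulr_ge0; lra.
have p3 : 0 <= u * (1 - v) by apply: mulr_ge0; lra.
have p4 : 0 <= v * (1 - u) by apply: mulr_ge0; lra.
rewrite /Xval; apply/andP; split; nra.
Qed.

Lemma Sval_in01 : 0 <= Sval u v b w <= 1.
Proof.
have hD := Dval_ge0; have hii := Xval_gap_ge; have /andP[x0 x1] := Xval_in01.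
rewrite /Sval; apply/andP; split.
  rewrite subr_ge0 sqrtr_le_sqr //.
  move: hD hii; rewrite /Dval /Yval /Xval; have := sqr_ge0 (u - (1 - v)); nra.
have := sqrtr_ge0 (Xval u v ^+ 2 - Yval u v b w); lra.
Qed.

Lemma Sval_eq0 : Sval u v b w = 0 <-> u + v = 1.
Proof.
have hD := Dval_ge0; have hii := Xval_gap_ge; have /andP[x0 x1] := Xval_in01.
split.
  rewrite /Sval => e0.
  have e : Num.sqrt (Xval u v ^+ 2 - Yval u v b w) = Xval u v by lra.
  have e2 : Dval u v b w = Xval u v ^+ 2 by rewrite -[LHS](sqr_sqrtr hD) /Dval e.
  move: e2 hii; rewrite /Dval /Yval /Xval => e2 hii.
  have : (u - (1 - v)) ^+ 2 <= 0 by nra.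
  have := sqr_ge0 (u - (1 - v)); nra.
move=> huv.
case: hS => lb [lw [[h0 h1 h2 hlb hlw] [eb ew hb1 hb2 [hw1 hw2]]]].
have ev : 1 - v = u by lra.
rewrite ev in hlb hlw; have elb : lb = u by lra.
have elw : lw = u by lra.
have ev' : v = 1 - u by lra.
have eY : Yval u v b w = 0 by rewrite /Yval eb ew elb elw ev'; ring.
by rewrite /Sval eY subr0 sqrtr_sqr ger0_norm // subrr.
Qed.

Lemma Sval_eq1 : Sval u v b w = 1 <-> [/\ u = 1, v = 1 & b = 0].
Proof.
have hD := Dval_ge0; have /andP[x0 x1] := Xval_in01.
case: hS => lb [lw [[h0 h1 h2 hlb hlw] [eb ew hb1 hb2 [hw1 hw2]]]].
have fb : 0 <= b by rewrite eb; nra.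
have fw : w <= 1 by rewrite ew; nra.
split.
  rewrite /Sval => e.
  have hs := sqrtr_ge0 (Xval u v ^+ 2 - Yval u v b w).
  have eX : Xval u v = 1 by lra.
  have es : Num.sqrt (Xval u v ^+ 2 - Yval u v b w) = 0 by lra.
  move/eqP: es; rewrite sqrtr_eq0 => hD0.
  have eD : Dval u v b w = 0 by rewrite /Dval; apply/eqP; rewrite eq_le hD0 hD.
  have p3 : 0 <= u * (1 - v) by apply: mulr_ge0; lra.
  have p4 : 0 <= v * (1 - u) by apply: mulr_ge0; lra.
  move: eX; rewrite /Xval => eX.
  have q3 : u * (1 - v) = 0 by nra.
  have q4 : v * (1 - u) = 0 by nra.
  have u0 : u != 0 by apply/eqP => u0; move: q4; rewrite u0; lra.
  have v1 : v = 1 by move: q3 => /eqP; rewrite mulf_eq0 (negbTE u0) /= subr_eq0 => /eqP.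
  have u1 : u = 1 by move: q4; rewrite v1 mul1r => /eqP; rewrite subr_eq0 => /eqP.
  move: eD; rewrite /Dval /Yval /Xval u1 v1 => eD.
  split => //; nra.
case=> u1 v1 b0.
have w1 : w = 1 by move: hw2; rewrite v1; lra.
have eD : Xval u v ^+ 2 - Yval u v b w = 0 by rewrite /Yval /Xval u1 v1 b0 w1; ring.
by rewrite /Sval eD sqrtr0 subr0 /Xval u1 v1; ring.
Qed.

End SpectralNorms.

Lemma sqrtr_dist_le (a c : R) : 0 <= a -> 0 <= c ->
  `|Num.sqrt a - Num.sqrt c| <= Num.sqrt `|a - c|.
Proof.
wlog hac : a c / c <= a.
  move=> W ha hc; have [h|h] := leP c a; first exact: W.
  by rewrite distrC (distrC a); apply: W => //; apply: ltW.
move=> ha hc.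
have ea : `|a - c| = a - c by rewrite ger0_norm // subr_ge0.
rewrite ea.
have h1 := sqr_sqrtr ha; have h2 := sqr_sqrtr hc.
have h3 : 0 <= a - c by rewrite subr_ge0.
have h4 := sqr_sqrtr h3.
have s1 := sqrtr_ge0 a; have s2 := sqrtr_ge0 c; have s3 := sqrtr_ge0 (a - c).
have mono : Num.sqrt c <= Num.sqrt a by rewrite ler_sqrt.
rewrite ger0_norm ?subr_ge0 //.
move: h1 h2 h4 s1 s2 s3 mono; move: (Num.sqrt a) (Num.sqrt c) (Num.sqrt (a - c)) => x y z.
nra.
Qed.

Lemma spectral_norms_bounds u v b w : spectral_norms u v b w ->
  [/\ 0 <= u <= 1, 0 <= v <= 1, 0 <= b <= 1, 0 <= w <= 1 & 0 <= Dval u v b w].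
Proof.
move=> hS; have hD := Dval_ge0 hS.
case: hS => lb [lw [[h0 h1 h2 hlb hlw] [eb ew hb1 hb2 [hw1 hw2]]]].
split => //; apply/andP; split; rewrite ?eb ?ew; nra.
Qed.

Lemma Sval_dist_le u v b w u' v' b' w' eta : spectral_norms u v b w -> spectral_norms u' v' b' w' -> 0 <= eta ->
  `|u - u'| <= eta -> `|v - v'| <= eta -> `|b - b'| <= eta -> `|w - w'| <= eta ->
  `|Sval u v b w - Sval u' v' b' w'| <= 6 * eta + Num.sqrt (20 * eta).
Proof.
move=> hS hS' he hu hv hb hw.
have [/andP[u0 u1] /andP[v0 v1] /andP[b0 b1] /andP[w0 w1] hD] := spectral_norms_bounds hS.
have [/andP[u0' u1'] /andP[v0' v1'] /andP[b0' b1'] /andP[w0' w1'] hD'] := spectral_norms_bounds hS'.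
move: hu; rewrite ler_norml => /andP[hu1 hu2].
move: hv; rewrite ler_norml => /andP[hv1 hv2].
move: hb; rewrite ler_norml => /andP[hb1 hb2].
move: hw; rewrite ler_norml => /andP[hw1 hw2].
have hX : `|Xval u v - Xval u' v'| <= 6 * eta.
  rewrite ler_norml /Xval; apply/andP; split; nra.
have /andP[x0 x1] : 0 <= Xval u v <= 1 by rewrite /Xval; apply/andP; split; nra.
have /andP[x0' x1'] : 0 <= Xval u' v' <= 1 by rewrite /Xval; apply/andP; split; nra.
have hDD : `|Dval u v b w - Dval u' v' b' w'| <= 20 * eta.
  have eD : forall a c d e, Dval a c d e = Xval a c ^+ 2 - Xval a c + d + (1 - e).
    by move=> a c d e; rewrite /Dval /Yval /Xval; ring.
  rewrite !eD; move: hX; rewrite !ler_norml => /andP[hX1 hX2].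
  apply/andP; split; nra.
have hs : Num.sqrt `|Dval u v b w - Dval u' v' b' w'| <= Num.sqrt (20 * eta).
  by rewrite ler_sqrt // mulr_ge0.
have := sqrtr_dist_le hD hD'.
rewrite /Sval -/(Dval u v b w) -/(Dval u' v' b' w') => hsd.
have : `|Xval u v - Num.sqrt (Dval u v b w) - (Xval u' v' - Num.sqrt (Dval u' v' b' w'))|
   <= `|Xval u v - Xval u' v'| + `|Num.sqrt (Dval u v b w) - Num.sqrt (Dval u' v' b' w')|.
  have -> : Xval u v - Num.sqrt (Dval u v b w) - (Xval u' v' - Num.sqrt (Dval u' v' b' w'))
    = (Xval u v - Xval u' v') - (Num.sqrt (Dval u v b w) - Num.sqrt (Dval u' v' b' w')) by ring.
  exact: ler_normB.
lra.
Qed.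

Lemma Sval_modulus (e : R) : 0 < e ->
  exists2 eta, 0 < eta & 6 * eta + Num.sqrt (20 * eta) < e.
Proof.
move=> he; exists (Num.min (e / 13) (e ^+ 2 / 81)).
  by rewrite lt_min !divr_gt0 // exprn_gt0.
set eta := Num.min _ _.
have h1 : eta <= e / 13 by rewrite /eta ge_min lexx.
have h2 : eta <= e ^+ 2 / 81 by rewrite /eta ge_min lexx orbT.
have h0 : 0 < eta by rewrite /eta lt_min !divr_gt0 // exprn_gt0.
have : Num.sqrt (20 * eta) <= e / 2.
  rewrite sqrtr_le_sqr; last lra.
  nra.
lra.
Qed.

End ScalarBounds.

(** * Inner product and operators *)

Section Operators.
Variables (R : realType) (H : lmodType R[i]) (ip : H -> H -> R[i]).
Hypothesis hip : inner_product ip.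

Definition dot (x y : H) : R := complex.Re (ip x y).
Definition sqn (x : H) : R := dot x x.
Definition rscale (r : R) (x : H) : H := (r%:C)%C *: x.

Lemma ipDl x y z : ip (x + y) z = ip x z + ip y z.
Proof. by case: hip => L _ _ _; have := L 1 x y z; rewrite scale1r mul1r. Qed.

Lemma ip0l z : ip 0 z = 0.
Proof.
have := ipDl 0 0 z; rewrite addr0 => /(congr1 (fun t => t - ip 0 z)).
by rewrite subrr addrK.
Qed.

Lemma ipZl a x z : ip (a *: x) z = a * ip x z.
Proof. by case: hip => L _ _ _; have := L a x 0 z; rewrite addr0 ip0l addr0. Qed.

Lemma ipC x y : ip y x = (ip x y)^*%C.
Proof. by case: hip => _ C _ _; apply: C. Qed.

Lemma ReJ (z : R[i]) : complex.Re (z^*%C) = complex.Re z.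
Proof. by case: z. Qed.

Lemma ReD (z w : R[i]) : complex.Re (z + w) = complex.Re z + complex.Re w.
Proof. by case: z; case: w. Qed.

Lemma ReM_C (r : R) (z : R[i]) : complex.Re ((r%:C)%C * z) = r * complex.Re z.
Proof. by case: z => a b /=; rewrite mul0r subr0. Qed.

Lemma dotC x y : dot y x = dot x y.
Proof. by rewrite /dot ipC ReJ. Qed.

Lemma dotDl x y z : dot (x + y) z = dot x z + dot y z.
Proof. by rewrite /dot ipDl ReD. Qed.

Lemma dotDr x y z : dot z (x + y) = dot z x + dot z y.
Proof. by rewrite dotC dotDl !(dotC z). Qed.

Lemma dotZl r x z : dot (rscale r x) z = r * dot x z.
Proof. by rewrite /dot /rscale ipZl ReM_C. Qed.

Lemma dotZr r x z : dot z (rscale r x) = r * dot z x.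
Proof. by rewrite dotC dotZl dotC. Qed.

Lemma rscaleN1 x : - x = rscale (-1) x.
Proof. by rewrite /rscale -(scaleN1r x); congr (_ *: _); apply/eqP; rewrite eq_complex /= oppr0 !eqxx. Qed.

Lemma dotNl x z : dot (- x) z = - dot x z.
Proof. by rewrite rscaleN1 dotZl mulN1r. Qed.

Lemma dotNr x z : dot z (- x) = - dot z x.
Proof. by rewrite dotC dotNl dotC. Qed.

Lemma dotBl x y z : dot (x - y) z = dot x z - dot y z.
Proof. by rewrite dotDl dotNl. Qed.

Lemma dotBr x y z : dot z (x - y) = dot z x - dot z y.
Proof. by rewrite dotDr dotNr. Qed.

Lemma dot0l z : dot 0 z = 0.
Proof. by rewrite /dot ip0l. Qed.
Lemma dot0r z : dot z 0 = 0.
Proof. by rewrite dotC dot0l. Qed.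

Lemma sqn_ge0 x : 0 <= sqn x.
Proof. case: hip => _ _ P _; move: (P x); rewrite lecE => /andP[_ h]; exact: h. Qed.

Lemma ipxx x : ip x x = ((sqn x)%:C)%C.
Proof.
case: hip => _ _ P _; have := P x; rewrite /sqn /dot.
case: (ip x x) => a b; rewrite lecE /= => /andP[/eqP hb _].
by apply/eqP; rewrite eq_complex /= -hb !eqxx.
Qed.

Lemma sqn_eq0 x : sqn x = 0 -> x = 0.
Proof. by case: hip => _ _ _ D => h; apply: D; rewrite ipxx h. Qed.

Lemma sqn_gt0 y : y <> 0 -> 0 < sqn y.
Proof. by move=> hy; rewrite lt_def sqn_ge0 andbT; apply/eqP => /sqn_eq0. Qed.

Lemma hnormE x : hnorm ip x = Num.sqrt (sqn x).
Proof. by []. Qed.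

Lemma rscaleA r s x : rscale r (rscale s x) = rscale (r * s) x.
Proof. by rewrite /rscale scalerA; congr (_ *: _); apply/eqP; rewrite eq_complex /= !mul0r !mulr0 subr0 addr0 !eqxx. Qed.

Lemma rscale1 x : rscale 1 x = x.
Proof. by rewrite /rscale scale1r. Qed.

Lemma rscale0 x : rscale 0 x = 0.
Proof. by rewrite /rscale scale0r. Qed.

Lemma rscaleBr r x y : rscale r (x - y) = rscale r x - rscale r y.
Proof. by rewrite /rscale scalerBr. Qed.

Lemma sqnZ r x : sqn (rscale r x) = r ^+ 2 * sqn x.
Proof. by rewrite /sqn dotZl dotZr mulrA expr2. Qed.

Lemma sqnD x y : sqn (x + y) = sqn x + 2 * dot x y + sqn y.
Proof. rewrite /sqn dotDl !dotDr (dotC y x); ring. Qed.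

Lemma sqnB x y : sqn (x - y) = sqn x - 2 * dot x y + sqn y.
Proof. rewrite /sqn dotBl !dotBr (dotC y x); ring. Qed.

Lemma dot_CauchySchwarz x y : dot x y ^+ 2 <= sqn x * sqn y.
Proof.
have [y0|ny] := eqVneq (sqn y) 0.
  by rewrite y0 mulr0 (sqn_eq0 y0) dot0r expr0n.
have hy : 0 < sqn y by rewrite lt_def ny sqn_ge0.
have := sqn_ge0 (x - rscale (dot x y / sqn y) y).
rewrite sqnB sqnZ dotZr => h.
have e : dot x y / sqn y * sqn y = dot x y by rewrite mulfVK.
rewrite -subr_ge0; move: h; set a := dot x y; set b := sqn y; set c := sqn x.
move=> h.
have -> : c * b - a ^+ 2 = b * (c - 2 * (a / b * a) + (a / b) ^+ 2 * b).
  by rewrite /b; field; rewrite ny.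
by apply: mulr_ge0 => //; rewrite ltW.
Qed.

Definition linop (T : H -> H) := is_linear_op T.
Definition bndop (T : H -> H) := exists K, forall x, sqn (T x) <= K * sqn x.
Definition symop (T : H -> H) := forall x y, dot (T x) y = dot x (T y).

Lemma linop0 T : linop T -> T 0 = 0.
Proof.
move=> L; have := L 1 0 0; rewrite !scale1r !addr0.
by move=> /(congr1 (fun t => t - T 0)); rewrite subrr addrK.
Qed.

Lemma linopD T x y : linop T -> T (x + y) = T x + T y.
Proof. by move=> L; have := L 1 x y; rewrite !scale1r. Qed.

Lemma linopZ T a x : linop T -> T (a *: x) = a *: T x.
Proof. by move=> L; have := L a x 0; rewrite !addr0 (linop0 L) addr0. Qed.

Lemma linop_rscale T r x : linop T -> T (rscale r x) = rscale r (T x).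
Proof. exact: linopZ. Qed.

Lemma linopN T x : linop T -> T (- x) = - T x.
Proof. by move=> L; rewrite !rscaleN1 linop_rscale. Qed.

Lemma linopB T x y : linop T -> T (x - y) = T x - T y.
Proof. by move=> L; rewrite linopD // linopN. Qed.

Definition image_ball (T : H -> H) := [set hnorm ip (T x) | x in [set x : H | hnorm ip x <= 1]].

Lemma opnormE T : opnorm ip T = sup (image_ball T).
Proof. by []. Qed.

Lemma sqn0 : sqn 0 = 0.
Proof. by rewrite /sqn dot0l. Qed.

Lemma image_ball0 T : linop T -> image_ball T 0.
Proof. move=> L; exists 0; first by rewrite /= hnormE sqn0 sqrtr0 ler01. by rewrite (linop0 L) hnormE sqn0 sqrtr0. Qed.

Lemma has_sup_image_ball T : linop T -> bndop T -> has_sup (image_ball T).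
Proof.
move=> L [K hK]; split; first by exists 0; exact: image_ball0.
exists (Num.sqrt (Num.max K 0)) => _ [x hx <-].
rewrite hnormE ler_sqrt; last by rewrite le_max lexx orbT.
move: hx; rewrite /= hnormE sqrtr_le_sqr ?ler01 // expr1n => hx.
have := hK x; have := sqn_ge0 x; have : K <= Num.max K 0 by rewrite le_max lexx.
have : 0 <= Num.max K 0 by rewrite le_max lexx orbT.
move: (Num.max K 0) => M. nra.
Qed.

Lemma opnorm_ge0 T : linop T -> bndop T -> 0 <= opnorm ip T.
Proof. by move=> L B; apply: sup_upper_bound (has_sup_image_ball L B) _ (image_ball0 L). Qed.

Lemma sqn_normalize x : 0 < sqn x -> sqn (rscale (Num.sqrt (sqn x))^-1 x) = 1.
Proof.
move=> hx; rewrite sqnZ exprVn sqr_sqrtr ?ltW // mulVf //; exact: lt0r_neq0.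
Qed.

Lemma sqn_le_opnorm T x : linop T -> bndop T -> sqn (T x) <= opnorm ip T ^+ 2 * sqn x.
Proof.
move=> L B; have [x0|nx] := eqVneq (sqn x) 0.
  by rewrite (sqn_eq0 x0) (linop0 L) sqn0 mulr0.
have hx : 0 < sqn x by rewrite lt_def nx sqn_ge0.
set s := Num.sqrt (sqn x); have hs : 0 < s by rewrite sqrtr_gt0.
have e : s ^+ 2 = sqn x by rewrite sqr_sqrtr ?ltW.
have := sup_upper_bound (has_sup_image_ball L B) (x := hnorm ip (T (rscale s^-1 x))).
rewrite -opnormE => h.
have : hnorm ip (T (rscale s^-1 x)) <= opnorm ip T.
  by apply: h; exists (rscale s^-1 x) => //; rewrite /= hnormE sqn_normalize // sqrtr1.
rewrite hnormE sqrtr_le_sqr ?opnorm_ge0 // linop_rscale // sqnZ exprVn e => h2.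
by rewrite -ler_pdivrMr // mulrC.
Qed.

Lemma opnorm_le T K : linop T -> 0 <= K -> (forall x, sqn (T x) <= K ^+ 2 * sqn x) -> opnorm ip T <= K.
Proof.
move=> L hK hb; rewrite opnormE; apply: ge_sup; first by exists 0; exact: image_ball0.
move=> _ [x hx <-]; rewrite hnormE sqrtr_le_sqr //.
move: hx; rewrite /= hnormE sqrtr_le_sqr ?ler01 // expr1n => hx.
apply: le_trans (hb x) _; have := sqn_ge0 x; have := sqr_ge0 K; nra.
Qed.

Lemma opnorm_almost_attained T : linop T -> bndop T -> (exists x : H, x <> 0) ->
  forall d, 0 < d -> exists y, sqn y = 1 /\ opnorm ip T ^+ 2 - d <= sqn (T y).
Proof.
move=> L B [x0 hx0] d hd; set u := opnorm ip T.
have hu := opnorm_ge0 L B.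
have [hle|hgt] := leP (u ^+ 2 - d) 0.
  have hn0 := sqn_gt0 hx0.
  exists (rscale (Num.sqrt (sqn x0))^-1 x0); split; first exact: sqn_normalize.
  by apply: le_trans hle (sqn_ge0 _).
have upos : 0 < u by rewrite lt_def hu andbT; apply/eqP => u0; move: hgt; rewrite u0 expr0n /=; lra.
set e := d / (2 * u).
have he : 0 < e by rewrite divr_gt0 // mulr_gt0.
have hue : 0 < u - e.
  rewrite subr_gt0 /e ltr_pdivrMr ?mulr_gt0 //. move: hgt; rewrite subr_gt0; nra.
have [_ [x hx <-] hlt] := sup_adherent he (has_sup_image_ball L B).
rewrite -opnormE -/u in hlt.
move: hx; rewrite /= hnormE sqrtr_le_sqr ?ler01 // expr1n => hx.
have hTx : (u - e) ^+ 2 < sqn (T x).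
  move: hlt; rewrite hnormE => hlt.
  have hsq := sqr_sqrtr (sqn_ge0 (T x)).
  have := sqrtr_ge0 (sqn (T x)); move: hlt hsq; move: (Num.sqrt (sqn (T x))) => t; nra.
have hue2 : u ^+ 2 - d <= (u - e) ^+ 2.
  have : e * (2 * u) = d by rewrite /e mulfVK // mulf_neq0 // lt0r_neq0.
  nra.
have nx : 0 < sqn x.
  rewrite lt_def sqn_ge0 andbT; apply/eqP => /sqn_eq0 xz.
  by move: hTx; rewrite xz (linop0 L) sqn0; nra.
exists (rscale (Num.sqrt (sqn x))^-1 x); split; first exact: sqn_normalize.
rewrite linop_rscale // sqnZ exprVn sqr_sqrtr ?ltW //.
have : sqn (T x) <= (sqn x)^-1 * sqn (T x).
  rewrite ler_pMl ?(lt_trans _ hTx) ?exprn_gt0 // invf_ge1 //.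
lra.
Qed.

Lemma linop_shift T c : linop T -> linop (fun z => T z - rscale c z).
Proof.
move=> L a z w; rewrite L /rscale scalerDr scalerBr !scalerA (mulrC a).
by rewrite opprD addrACA.
Qed.

Lemma symop_shift T c : symop T -> symop (fun z => T z - rscale c z).
Proof. by move=> S z w; rewrite dotBl dotBr dotZl dotZr S. Qed.

Lemma polarization U x y : linop U -> symop U ->
  dot (U (x + y)) (x + y) - dot (U (x - y)) (x - y) = 4 * dot (U x) y.
Proof.
move=> L S; rewrite linopD // linopB // !dotDl !dotDr !dotNl !dotNr.
rewrite (S y x) (dotC (U x) y); ring.
Qed.

Lemma sqn_le_of_form U r : linop U -> symop U -> 0 <= r ->
  (forall x, `|dot (U x) x| <= r * sqn x) ->
  forall x, sqn (U x) <= r ^+ 2 * sqn x.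
Proof.
move=> L S hr hb x.
(* polarization at y = s Ux, then s = 1/r *)
have key : forall s, 4 * (s * sqn (U x)) <= 2 * r * (sqn x + s ^+ 2 * sqn (U x)).
  move=> s; set y := rscale s (U x).
  have hp := polarization x y L S.
  have h1 := hb (x + y); have h2 := hb (x - y).
  have e1 : dot (U x) y = s * sqn (U x) by rewrite /y dotZr.
  have e2 : sqn (x + y) + sqn (x - y) = 2 * (sqn x + s ^+ 2 * sqn (U x)).
    rewrite sqnD sqnB /y sqnZ; ring.
  rewrite -e1 -hp; move: h1 h2 e2.
  move: (dot (U (x + y)) (x + y)) (dot (U (x - y)) (x - y)) => P Q.
  rewrite !ler_norml => /andP[h1 h1'] /andP[h2 h2'] e2. nra.
have ha := sqn_ge0 (U x); have hn := sqn_ge0 x.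
have [r0|rp] := eqVneq r 0.
  by have := key 1; rewrite r0 expr1n mul1r; nra.
have rpos : 0 < r by rewrite lt_def rp hr.
have := key r^-1; have e : r * r^-1 = 1 by rewrite mulfV.
move=> k; rewrite -subr_ge0.
have -> : r ^+ 2 * sqn x - sqn (U x) = r ^+ 2 / 2 * (2 * r * (sqn x + r^-1 ^+ 2 * sqn (U x)) - 4 * (r^-1 * sqn (U x))) / r.
  by field.
apply: divr_ge0; last exact: ltW.
apply: mulr_ge0; first by apply: divr_ge0 => //; apply: sqr_ge0.
by rewrite subr_ge0.
Qed.

Lemma sqn_shift_le_of_form T c r : linop T -> symop T -> 0 <= r ->
  (forall x, `|dot (T x) x - c * sqn x| <= r * sqn x) ->
  forall x, sqn (T x - rscale c x) <= r ^+ 2 * sqn x.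
Proof.
move=> L S hr hb x.
apply: (sqn_le_of_form (U := fun z => T z - rscale c z)) => //; [exact: linop_shift|exact: symop_shift|].
by move=> z; rewrite dotBl dotZl.
Qed.

(* l lies in the approximate point spectrum of T; for selfadjoint T this is
   the whole spectrum. *)
Definition approx_eig (T : H -> H) (l : R) :=
  forall e, 0 < e -> exists y, sqn y = 1 /\ sqn (T y - rscale l y) <= e.

Definition posop (T : H -> H) := [/\ linop T, symop T, bndop T & forall x, 0 <= dot (T x) x].

Lemma approx_eig_form T l : approx_eig T l -> forall e, 0 < e ->
  exists y, sqn y = 1 /\ (dot (T y) y - l) ^+ 2 <= e.
Proof.
move=> A e he; have [y [y1 hy]] := A e he; exists y; split => //.
have := dot_CauchySchwarz (T y - rscale l y) y; rewrite dotBl dotZl -/(sqn y) y1 mulr1.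
by move=> h; rewrite mulr1 in h; exact: le_trans h hy.
Qed.

Lemma approx_eig_le T l K : (forall y, sqn y = 1 -> dot (T y) y <= K) -> approx_eig T l -> l <= K.
Proof.
move=> hK A; rewrite leNgt; apply/negP => hl.
have he : 0 < (l - K) ^+ 2 / 2 by rewrite divr_gt0 // exprn_gt0 // subr_gt0.
have [y [y1 hy]] := approx_eig_form A he; have := hK y y1; nra.
Qed.

Lemma approx_eig_ge T l K : (forall y, sqn y = 1 -> K <= dot (T y) y) -> approx_eig T l -> K <= l.
Proof.
move=> hK A; rewrite leNgt; apply/negP => hl.
have he : 0 < (K - l) ^+ 2 / 2 by rewrite divr_gt0 // exprn_gt0 // subr_gt0.
have [y [y1 hy]] := approx_eig_form A he; have := hK y y1; nra.
Qed.

Section Pos.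
Variable T : H -> H.
Hypothesis hT : posop T.
Hypothesis hne : exists x : H, x <> 0.

Let u := opnorm ip T.
Lemma posop_opnorm_ge0 : 0 <= u.
Proof. by case: hT => L _ B _; apply: opnorm_ge0. Qed.

Lemma posop_form_le x : dot (T x) x <= u * sqn x.
Proof.
case: hT => L _ B P.
have h1 := dot_CauchySchwarz (T x) x; have h2 := sqn_le_opnorm x L B.
have h3 := P x; have h4 := sqn_ge0 x; have h5 := posop_opnorm_ge0; rewrite -/u in h2.
have h6 := sqn_ge0 (T x).
have : dot (T x) x ^+ 2 <= (u * sqn x) ^+ 2.
  apply: le_trans h1 _; rewrite exprMn; nra.
move=> h; rewrite -(ler_pXn2r (n := 2)) // nnegrE ?mulr_ge0 //.
Qed.

Lemma posop_sqn_le_form x : sqn (T x) <= u * dot (T x) x.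
Proof.
case: hT => L S B P.
have := sqn_shift_le_of_form (c := u / 2) (r := u / 2) L S _ _ x.
rewrite sqnB sqnZ dotZr => h.
have hu := posop_opnorm_ge0.
have : sqn (T x) - 2 * (u / 2 * dot (T x) x) + (u / 2) ^+ 2 * sqn x <= (u / 2) ^+ 2 * sqn x.
  apply: h; first by rewrite divr_ge0.
  move=> z; have := P z; have := posop_form_le z; have := sqn_ge0 z.
  move: (dot (T z) z) (sqn z) => t n h1 h2 h3.
  rewrite ler_norml; apply/andP; split; nra.
lra.
Qed.

Lemma posop_approx_eig_opnorm : approx_eig T u.
Proof.
case: hT => L S B P => e he.
have [y [y1 hy]] := opnorm_almost_attained L B hne he.
exists y; split => //.
rewrite sqnB sqnZ dotZr y1.
have := posop_sqn_le_form y; have := posop_form_le y; rewrite y1 -/u in hy *.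
nra.
Qed.

Lemma posop_approx_eig_range l : approx_eig T l -> 0 <= l <= u.
Proof.
case: hT => L S B P => A; apply/andP; split.
  by apply: approx_eig_ge A => y _; apply: P.
by apply: approx_eig_le A => y y1; have := posop_form_le y; rewrite y1 mulr1.
Qed.

End Pos.

Ltac dot_expand := rewrite /sqn; rewrite !(dotDl, dotDr, dotNl, dotNr, dotZl, dotZr).

Lemma sqnN x : sqn (- x) = sqn x.
Proof. by rewrite /sqn dotNl dotNr opprK. Qed.

Lemma sqnB_le x y : sqn (x - y) <= 2 * sqn x + 2 * sqn y.
Proof. have := sqn_ge0 (x + y); rewrite sqnB sqnD; lra. Qed.

Lemma linop_compl T : linop T -> linop (compl T).
Proof. by move=> L a x y; rewrite /compl L scalerBr opprD addrACA. Qed.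

Lemma symop_compl T : symop T -> symop (compl T).
Proof. by move=> S x y; rewrite /compl dotBl dotBr S. Qed.

Lemma bndop_compl T : bndop T -> bndop (compl T).
Proof.
move=> [K hK]; exists (2 + 2 * Num.max K 0) => x; rewrite /compl.
apply: le_trans (sqnB_le _ _) _.
have := hK x; have := sqn_ge0 x; have : K <= Num.max K 0 by rewrite le_max lexx.
move: (Num.max K 0) => M; nra.
Qed.

Lemma linop_opmul T U : linop T -> linop U -> linop (opmul T U).
Proof. by move=> LT LU a x y; rewrite /opmul LU LT. Qed.

Lemma bndop_opmul T U : bndop T -> bndop U -> bndop (opmul T U).
Proof.
move=> [K hK] [K' hK']; exists (Num.max K 0 * Num.max K' 0) => x; rewrite /opmul.
have h1 := hK (U x); have h2 := hK' x; have := sqn_ge0 x; have := sqn_ge0 (U x).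
have : K <= Num.max K 0 by rewrite le_max lexx.
have : K' <= Num.max K' 0 by rewrite le_max lexx.
have : 0 <= Num.max K 0 by rewrite le_max lexx orbT.
have : 0 <= Num.max K' 0 by rewrite le_max lexx orbT.
move: (Num.max K 0) (Num.max K' 0) => M M' hM' hM hKM hKM' hu hx.
have s1 : sqn (T (U x)) <= M * sqn (U x) by nra.
have s2 : sqn (U x) <= M' * sqn x by nra.
have s3 : M * sqn (U x) <= M * (M' * sqn x) by apply: ler_wpM2l.
by rewrite -mulrA; apply: le_trans s1 s3.
Qed.

Lemma linop_bndop_of_bounded T : bounded_op ip T -> linop T /\ bndop T.
Proof.
move=> [L [M hM]]; split => //; exists (M ^+ 2) => x.
have := hM x; rewrite !hnormE => h.
have h1 := sqr_sqrtr (sqn_ge0 (T x)); have h2 := sqr_sqrtr (sqn_ge0 x).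
have h3 := sqrtr_ge0 (sqn (T x)); have h4 := sqrtr_ge0 (sqn x).
rewrite -h1 -h2; move: h h3 h4; move: (Num.sqrt (sqn (T x))) (Num.sqrt (sqn x)) => a c.
nra.
Qed.

Lemma approx_eig_compl T m : linop T -> (approx_eig (compl T) m <-> approx_eig T (1 - m)).
Proof.
have e : forall y, sqn (compl T y - rscale m y) = sqn (T y - rscale (1 - m) y).
  move=> y; rewrite /compl; dot_expand; rewrite (dotC (T y) y); ring.
by move=> L; split => A ee he; have [y [y1 hy]] := A ee he; exists y; rewrite ?e // -e.
Qed.

(** * Effects *)

Section Eff.
Variable E : H -> H.
Hypothesis hE : effect ip E.

Lemma effect_linop_bndop : linop E /\ bndop E.
Proof. by case: hE => B _ _; apply: linop_bndop_of_bounded. Qed.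
Lemma effect_linop : linop E. Proof. by case: effect_linop_bndop. Qed.
Lemma effect_bndop : bndop E. Proof. by case: effect_linop_bndop. Qed.
Lemma effect_symop : symop E.
Proof. by case: hE => _ S _ x y; rewrite /dot S. Qed.
Lemma effect_form x : 0 <= dot (E x) x <= sqn x.
Proof.
case: hE => _ _ P; have /andP[h1 h2] := P x.
by rewrite /dot /sqn; move: h1 h2; rewrite !lecE => /andP[_ ->] /andP[_ ->].
Qed.
Lemma effect_posop : posop E.
Proof.
split; [exact: effect_linop|exact: effect_symop|exact: effect_bndop|].
by move=> x; case/andP: (effect_form x).
Qed.

Lemma effect_sqn_le_form x : sqn (E x) <= dot (E x) x.
Proof.
have := sqn_shift_le_of_form (c := 1/2) (r := 1/2) effect_linop effect_symop _ _ x.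
rewrite sqnB sqnZ dotZr => h.
have : sqn (E x) - 2 * (1 / 2 * dot (E x) x) + (1 / 2) ^+ 2 * sqn x <= (1 / 2) ^+ 2 * sqn x.
  apply: h; [lra|move=> z]; have /andP[h1 h2] := effect_form z.
  rewrite ler_norml; apply/andP; split; lra.
lra.
Qed.

Lemma compl_posop : posop (compl E).
Proof.
split; [exact: linop_compl effect_linop|exact: symop_compl effect_symop|exact: bndop_compl effect_bndop|].
move=> x; rewrite /compl dotBl subr_ge0; by case/andP: (effect_form x).
Qed.

Definition AAc := opmul E (compl E).

Lemma AAcE x : AAc x = E x - E (E x).
Proof. by rewrite /AAc /opmul /compl (linopB _ _ effect_linop). Qed.

Lemma AAc_form x : dot (AAc x) x = dot (E x) x - sqn (E x).
Proof. by rewrite AAcE dotBl (effect_symop (E x) x). Qed.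

Lemma AAc_posop : posop AAc.
Proof.
split; [exact: linop_opmul effect_linop (linop_compl effect_linop)| |
        exact: bndop_opmul effect_bndop (bndop_compl effect_bndop)|].
  by move=> x y; rewrite !AAcE dotBl dotBr (effect_symop (E x) y) (effect_symop x (E y)) (effect_symop x y).
by move=> x; rewrite AAc_form subr_ge0 effect_sqn_le_form.
Qed.

Lemma compl_AAc_posop : posop (compl AAc).
Proof.
case: AAc_posop => L S B _.
split; [exact: linop_compl L|exact: symop_compl S|exact: bndop_compl B|].
move=> x; rewrite /compl dotBl AAc_form; have /andP[h1 h2] := effect_form x.
have := sqn_ge0 (E x); lra.
Qed.

End Eff.

Lemma sqn_normalize_shift T r y : linop T -> 0 < sqn y ->
  sqn (T (rscale (Num.sqrt (sqn y))^-1 y) - rscale r (rscale (Num.sqrt (sqn y))^-1 y))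
  = sqn (T y - rscale r y) / sqn y.
Proof.
move=> L hy; rewrite linop_rscale // rscaleA mulrC -rscaleA -rscaleBr sqnZ exprVn sqr_sqrtr ?ltW //.
by rewrite mulrC.
Qed.

Lemma not_approx_eig_bounded_below T r : linop T -> ~ approx_eig T r ->
  exists e, 0 < e /\ forall y, e * sqn y <= sqn (T y - rscale r y).
Proof.
move=> L nA.
have [e he0] := not_all_ex_not _ _ nA.
have [he hne] := imply_to_and _ _ he0.
exists e; split => // y.
have [y0|ny] := eqVneq (sqn y) 0; first by rewrite y0 mulr0 sqn_ge0.
have hy : 0 < sqn y by rewrite lt_def ny sqn_ge0.
have := not_ex_all_not _ _ hne (rscale (Num.sqrt (sqn y))^-1 y).
move=> /not_and_or [|]; first by rewrite sqn_normalize.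
rewrite sqn_normalize_shift // => /negP; rewrite -ltNge ltr_pdivlMr // => h.
exact: ltW.
Qed.

Lemma eig_approx_eig T l y : linop T -> T y = rscale l y -> y <> 0 -> approx_eig T l.
Proof.
move=> L ey hy e he; have hn := sqn_gt0 hy.
exists (rscale (Num.sqrt (sqn y))^-1 y); split; first exact: sqn_normalize.
by rewrite sqn_normalize_shift // ey subrr sqn0 mul0r ltW.
Qed.

Lemma approx_eig_scalar E l m : (forall x, E x = rscale l x) -> approx_eig E m -> m = l.
Proof.
move=> hl A; apply/eqP; rewrite -subr_eq0; apply/negPn/negP => hne0.
have hsq : 0 < (l - m) ^+ 2 by rewrite lt_def sqr_ge0 andbT sqrf_eq0 subr_eq0 eq_sym -subr_eq0.
have he : 0 < (l - m) ^+ 2 / 2 by rewrite divr_gt0.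
have [y [y1 hy]] := A _ he.
have : sqn (E y - rscale m y) = (l - m) ^+ 2 * sqn y by rewrite hl; dot_expand; ring.
rewrite y1 mulr1 => e; rewrite e in hy.
lra.
Qed.

Lemma approx_eig_similar F G C D l : linop F -> linop C -> bndop C -> linop D -> bndop D ->
  (forall x, D (C x) = x) -> (forall x, G x = C (F (D x))) -> approx_eig F l -> approx_eig G l.
Proof.
move=> LF LC BC LD BD hDC hG A e he.
set c := opnorm ip C; set d := opnorm ip D.
have c0 : 0 <= c := opnorm_ge0 LC BC. have d0 : 0 <= d := opnorm_ge0 LD BD.
set Kc := c ^+ 2 + 1; set Kd := d ^+ 2 + 1.
have Kc0 : 0 < Kc by rewrite /Kc; have := sqr_ge0 c; lra.
have Kd0 : 0 < Kd by rewrite /Kd; have := sqr_ge0 d; lra.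
have [y [y1 hy]] := A (e / (Kc * Kd)) (divr_gt0 he (mulr_gt0 Kc0 Kd0)).
have LG : linop G.
  move=> a x z; rewrite !hG (LD a x z) (LF a (D x) (D z)) (LC a (F (D x)) (F (D z))) //.
set z := C y.
have hz : 1 <= Kd * sqn z.
  have := sqn_le_opnorm z LD BD; rewrite /z hDC y1 -/d => h.
  have := sqn_ge0 (C y); rewrite /Kd; nra.
have nz : 0 < sqn z by have := sqn_ge0 z; nra.
exists (rscale (Num.sqrt (sqn z))^-1 z); split; first exact: sqn_normalize.
rewrite sqn_normalize_shift //.
have eq : G z - rscale l z = C (F y - rscale l y) by rewrite hG /z hDC (linopB _ _ LC) (linop_rscale _ _ LC).
rewrite eq.
have h1 := sqn_le_opnorm (F y - rscale l y) LC BC; rewrite -/c in h1.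
have h2 : sqn (C (F y - rscale l y)) <= Kc * (e / (Kc * Kd)).
  have := sqn_ge0 (F y - rscale l y); rewrite /Kc; nra.
have ee : Kc * (e / (Kc * Kd)) = e / Kd by field; apply/andP; split; apply: lt0r_neq0.
rewrite ee in h2.
rewrite ler_pdivrMr // -(ler_pM2l Kd0).
have eq2 : Kd * (e / Kd) = e by rewrite mulrC mulfVK // lt0r_neq0.
have s1 : Kd * sqn (C (F y - rscale l y)) <= Kd * (e / Kd) by rewrite ler_pM2l.
have s2 : e <= e * (Kd * sqn z) by rewrite ler_pMr.
have : Kd * (e * sqn z) = e * (Kd * sqn z) by ring.
lra.
Qed.

Lemma sqnD_le_sqr a c x al be : 0 <= al -> 0 <= be ->
  sqn a <= al ^+ 2 * sqn x -> sqn c <= be ^+ 2 * sqn x -> sqn (a + c) <= (al + be) ^+ 2 * sqn x.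
Proof.
move=> h1 h2 ha hc; rewrite sqnD.
have hx := sqn_ge0 x; have hA := sqn_ge0 a; have hC := sqn_ge0 c.
have cs := dot_CauchySchwarz a c.
have hr : dot a c <= al * be * sqn x.
  have p : 0 <= al * be * sqn x by rewrite !mulr_ge0.
  have : dot a c ^+ 2 <= (al * be * sqn x) ^+ 2.
    apply: le_trans cs _; rewrite !exprMn.
    have t1 : sqn a * sqn c <= (al ^+ 2 * sqn x) * sqn c by apply: ler_wpM2r.
    have t2 : (al ^+ 2 * sqn x) * sqn c <= (al ^+ 2 * sqn x) * (be ^+ 2 * sqn x).
      by apply: ler_wpM2l => //; rewrite mulr_ge0 // sqr_ge0.
    have := le_trans t1 t2; move=> t; apply: le_trans t _; rewrite le_eqVlt; apply/orP; left; apply/eqP; ring.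
  move=> h; rewrite leNgt; apply/negP => hlt.
  have q1 : 0 < dot a c - al * be * sqn x by rewrite subr_gt0.
  have q2 : 0 < dot a c + al * be * sqn x by lra.
  have := mulr_gt0 q1 q2; nra.
nra.
Qed.

Lemma opnorm_dist_le T U K : linop T -> bndop T -> linop U -> bndop U -> 0 <= K ->
  (forall x, sqn (T x - U x) <= K ^+ 2 * sqn x) -> `|opnorm ip T - opnorm ip U| <= K.
Proof.
move=> LT BT LU BU hK hd.
have hT := opnorm_ge0 LT BT; have hU := opnorm_ge0 LU BU.
have a1 : opnorm ip T <= opnorm ip U + K.
  apply: opnorm_le => //; first by rewrite addr_ge0.
  move=> x; have -> : T x = U x + (T x - U x) by rewrite addrC subrK.
  by apply: sqnD_le_sqr => //; apply: sqn_le_opnorm.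
have a2 : opnorm ip U <= opnorm ip T + K.
  apply: opnorm_le => //; first by rewrite addr_ge0.
  move=> x; have -> : U x = T x + - (T x - U x) by rewrite opprB addrC subrK.
  by apply: sqnD_le_sqr => //; [apply: sqn_le_opnorm|rewrite sqnN].
rewrite ler_norml; apply/andP; split; lra.
Qed.

Lemma sqn_compl_sub T U x : sqn (compl T x - compl U x) = sqn (T x - U x).
Proof.
rewrite /compl; move: (T x) (U x) => p q; dot_expand.
rewrite ?(dotC x p) ?(dotC x q) ?(dotC p q); ring.
Qed.

Lemma linop_opsub T U : linop T -> linop U -> linop (opsub T U).
Proof. by move=> LT LU a x y; rewrite /opsub LT LU scalerBr opprD addrACA. Qed.

Lemma bndop_opsub T U : bndop T -> bndop U -> bndop (opsub T U).
Proof.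
move=> [K hK] [K' hK']; exists (2 * Num.max K 0 + 2 * Num.max K' 0) => x; rewrite /opsub.
apply: le_trans (sqnB_le _ _) _.
have := hK x; have := hK' x; have := sqn_ge0 x; have : K <= Num.max K 0 by rewrite le_max lexx.
have : K' <= Num.max K' 0 by rewrite le_max lexx.
move: (Num.max K 0) (Num.max K' 0) => M M'; nra.
Qed.

Lemma S2E E : S2 ip E = Sval (opnorm ip E) (opnorm ip (compl E)) (opnorm ip (AAc E)) (opnorm ip (compl (AAc E))).
Proof. by []. Qed.

Lemma YqE E : Yq ip E = Yval (opnorm ip E) (opnorm ip (compl E)) (opnorm ip (AAc E)) (opnorm ip (compl (AAc E))).
Proof. by []. Qed.

Lemma XqE E : Xq ip E = Xval (opnorm ip E) (opnorm ip (compl E)).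
Proof. by []. Qed.

Lemma S2_compl A : linop A -> S2 ip (compl A) = S2 ip A.
Proof.
move=> L.
have cc : compl (compl A) = A by apply: functional_extensionality => x; rewrite /compl subKr.
have om : opmul (compl A) A = opmul A (compl A).
  by apply: functional_extensionality => x; rewrite /opmul /compl (linopB _ _ L).
rewrite !S2E /AAc cc om.
have eX : Xval (opnorm ip (compl A)) (opnorm ip A) = Xval (opnorm ip A) (opnorm ip (compl A)).
  by rewrite /Xval; ring.
have eY : forall b w, Yval (opnorm ip (compl A)) (opnorm ip A) b w = Yval (opnorm ip A) (opnorm ip (compl A)) b w.
  by move=> b w; rewrite /Yval; ring.
by rewrite /Sval eX eY.
Qed.

(** * The sharpness measure *)

Section NonzeroSpace.
Hypothesis hne : exists x : H, x <> 0.

Section Spec.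
Variable E : H -> H.
Hypothesis hE : effect ip E.

Let u := opnorm ip E.
Let v := opnorm ip (compl E).
Let b := opnorm ip (AAc E).
Let w := opnorm ip (compl (AAc E)).

Lemma approx_eig_opnorm : approx_eig E u.
Proof. exact: posop_approx_eig_opnorm (effect_posop hE) hne. Qed.

Lemma approx_eig_le_opnorm l : approx_eig E l -> 0 <= l <= u.
Proof. by move=> A; have := posop_approx_eig_range (effect_posop hE) A. Qed.

Lemma approx_eig_opnorm_compl : approx_eig E (1 - v).
Proof. by apply/(approx_eig_compl _ (effect_linop hE)); apply: posop_approx_eig_opnorm (compl_posop hE) hne. Qed.

Lemma approx_eig_ge_compl l : approx_eig E l -> 0 <= 1 - l <= v.
Proof.
move=> A; have : approx_eig (compl E) (1 - l) by apply/(approx_eig_compl _ (effect_linop hE)); rewrite subKr.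
by move/(posop_approx_eig_range (compl_posop hE)).
Qed.

(* AA' - (r - r^2) = (1 - r - A)(A - r) *)
Lemma sqn_AAc_shift r y : sqn (AAc E y - rscale (r - r ^+ 2) y)
  = sqn (rscale (1 - r) (E y - rscale r y) - E (E y - rscale r y)).
Proof.
rewrite AAcE // (linopB _ _ (effect_linop hE)) (linop_rscale _ _ (effect_linop hE)).
dot_expand.
by rewrite (dotC (E y) y) (dotC (E (E y)) y) (dotC (E (E y)) (E y)); ring.
Qed.

Lemma approx_eig_AAc l : approx_eig E l -> approx_eig (AAc E) (l - l ^+ 2).
Proof.
move=> A e he.
have hu : 0 <= u := opnorm_ge0 (effect_linop hE) (effect_bndop hE).
set K := 2 * (1 - l) ^+ 2 + 2 * u ^+ 2 + 1.
have hK : 0 < K by rewrite /K; have := sqr_ge0 (1 - l); have := sqr_ge0 u; lra.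
have [y [y1 hy]] := A (e / K) (divr_gt0 he hK).
exists y; split => //.
rewrite sqn_AAc_shift; set z := E y - rscale l y; apply: le_trans (sqnB_le _ _) _.
rewrite sqnZ.
have h1 := sqn_le_opnorm z (effect_linop hE) (effect_bndop hE); rewrite -/u in h1.
have hz := sqn_ge0 z.
have : sqn z * K <= e by rewrite -ler_pdivlMr.
rewrite /K; have := sqr_ge0 (1 - l); nra.
Qed.

(* With r and 1 - r the roots of t - t^2 = m: were neither an approximate
   eigenvalue of A, both factors of AA' - m = (1 - r - A)(A - r) would be
   bounded below, hence so would AA' - m. *)
Lemma approx_eig_AAcP m : approx_eig (AAc E) m -> exists l, approx_eig E l /\ m = l - l ^+ 2.
Proof.
move=> A.
have m0 : 0 <= m by case/andP: (posop_approx_eig_range (AAc_posop hE) A).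
have m4 : m <= 1 / 4.
  apply: approx_eig_le A => y y1; rewrite AAc_form //.
  have := dot_CauchySchwarz (E y) y; rewrite y1 mulr1 -/(sqn (E y)); have := sqr_ge0 (dot (E y) y - 1 / 2); nra.
set s := Num.sqrt (1 - 4 * m).
have hs : s ^+ 2 = 1 - 4 * m by rewrite sqr_sqrtr //; lra.
set r2 := (1 + s) / 2.
have hm : m = r2 - r2 ^+ 2 by rewrite /r2; nra.
case: (classic (approx_eig E r2)) => [h2|n2]; first by exists r2.
case: (classic (approx_eig E (1 - r2))) => [h1|n1]; first by exists (1 - r2); split => //; rewrite hm; ring.
have [e1 [he1 b1]] := not_approx_eig_bounded_below (effect_linop hE) n1.
have [e2 [he2 b2]] := not_approx_eig_bounded_below (effect_linop hE) n2.
have [y [y1 hy]] := A (e1 * e2 / 2) (divr_gt0 (mulr_gt0 he1 he2) (ltr0Sn _ 1)).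
set z := E y - rscale r2 y.
have eq : sqn (AAc E y - rscale m y) = sqn (E z - rscale (1 - r2) z).
  by rewrite hm sqn_AAc_shift -sqnN opprB.
have := b1 z; have := b2 y; rewrite y1 mulr1 -eq => h2 h1.
have hz := sqn_ge0 z.
have : e1 * e2 <= e1 * sqn z by apply: ler_wpM2l => //; exact: ltW.
nra.
Qed.

Lemma opnorm_AAc_attained : exists lb, approx_eig E lb /\ b = lb - lb ^+ 2.
Proof. exact: approx_eig_AAcP (posop_approx_eig_opnorm (AAc_posop hE) hne). Qed.

Lemma opnorm_AAc_ge l : approx_eig E l -> l - l ^+ 2 <= b.
Proof. by move=> A; case/andP: (posop_approx_eig_range (AAc_posop hE) (approx_eig_AAc A)). Qed.

Lemma opnorm_compl_AAc_attained : exists lw, approx_eig E lw /\ w = 1 - (lw - lw ^+ 2).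
Proof.
have := posop_approx_eig_opnorm (compl_AAc_posop hE) hne.
move/(approx_eig_compl _ (linop_opmul (effect_linop hE) (linop_compl (effect_linop hE)))) => /approx_eig_AAcP [l [A e]].
by exists l; split => //; rewrite -e -/w; ring.
Qed.

Lemma opnorm_compl_AAc_ge l : approx_eig E l -> 1 - (l - l ^+ 2) <= w.
Proof.
move=> A; have := approx_eig_AAc A => B.
have : approx_eig (compl (AAc E)) (1 - (l - l ^+ 2)).
  by apply/(approx_eig_compl _ (linop_opmul (effect_linop hE) (linop_compl (effect_linop hE)))); rewrite subKr.
by move=> /(posop_approx_eig_range (compl_AAc_posop hE)) /andP[].
Qed.

End Spec.

Lemma effect_spectral_norms E : effect ip E ->
  spectral_norms (opnorm ip E) (opnorm ip (compl E)) (opnorm ip (AAc E)) (opnorm ip (compl (AAc E))).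
Proof.
move=> hE.
have [lb [Ab eb]] := opnorm_AAc_attained hE.
have [lw [Aw ew]] := opnorm_compl_AAc_attained hE.
have /andP[hv0 hv] := approx_eig_le_opnorm hE (approx_eig_opnorm_compl hE).
have /andP[hu1 _] := approx_eig_ge_compl hE (approx_eig_opnorm hE).
have /andP[_ hb1] := approx_eig_le_opnorm hE Ab. have /andP[_ hb2] := approx_eig_ge_compl hE Ab.
have /andP[_ hw1] := approx_eig_le_opnorm hE Aw. have /andP[_ hw2] := approx_eig_ge_compl hE Aw.
exists lb, lw; split.
  split; try (apply/andP; split); lra.
split => //.
- exact (opnorm_AAc_ge hE (approx_eig_opnorm hE)).
- exact (opnorm_AAc_ge hE (approx_eig_opnorm_compl hE)).
- split; first exact (opnorm_compl_AAc_ge hE (approx_eig_opnorm hE)).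
  exact (opnorm_compl_AAc_ge hE (approx_eig_opnorm_compl hE)).
Qed.

Lemma trivial_effect_opnormP E : effect ip E ->
  (opnorm ip E + opnorm ip (compl E) = 1 <-> trivial_effect E).
Proof.
move=> hE; have [/andP[u0 u1] _ _ _ _] := spectral_norms_bounds (effect_spectral_norms hE).
split => [huv|[l [hl hx]]].
  exists (opnorm ip E); split; first by rewrite u0 u1.
  move=> x; apply/eqP; rewrite -subr_eq0; apply/eqP; apply: sqn_eq0.
  apply/eqP; rewrite eq_le sqn_ge0 andbT.
  have := sqn_shift_le_of_form (c := opnorm ip E) (r := 0) (effect_linop hE) (effect_symop hE) (lexx 0) _ x.
  rewrite expr0n mul0r; apply => z.
  have h1 := posop_form_le (effect_posop hE) z; have h2 := posop_form_le (compl_posop hE) z.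
  move: h2; rewrite /compl dotBl -/(sqn z) => h2.
  have h3 := sqn_ge0 z.
  rewrite mul0r normr_le0 subr_eq0; apply/eqP.
  have : opnorm ip (compl E) = 1 - opnorm ip E by lra.
  move=> ev; rewrite ev in h2; nra.
have e1 := approx_eig_scalar hx (approx_eig_opnorm hE).
have e2 := approx_eig_scalar hx (approx_eig_opnorm_compl hE).
lra.
Qed.

Lemma nontrivial_projection_opnormP E : effect ip E ->
  ([/\ opnorm ip E = 1, opnorm ip (compl E) = 1 & opnorm ip (AAc E) = 0] <-> nontrivial_projection E).
Proof.
move=> hE; have [/andP[u0 u1] /andP[v0 v1] /andP[b0 b1] _ _] := spectral_norms_bounds (effect_spectral_norms hE).
have L := effect_linop hE; have B := effect_bndop hE.
split.
  case=> u1' v1' b0'.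
  split.
    move=> x; have := sqn_le_opnorm x (linop_opmul L (linop_compl L)) (bndop_opmul B (bndop_compl B)).
    rewrite -/(AAc E) b0' expr0n mul0r => h.
    have : sqn (AAc E x) = 0 by apply/eqP; rewrite eq_le h sqn_ge0.
    by move/sqn_eq0; rewrite AAcE // => /eqP; rewrite subr_eq0 => /eqP.
  split.
    apply: NNPP => hn.
    have hz : forall x, E x = 0 by move=> x; apply: NNPP => hx; apply: hn; exists x.
    have : opnorm ip E <= 0.
      by apply: opnorm_le => // x; rewrite hz sqn0 expr0n mul0r.
    lra.
  apply: NNPP => hn.
  have hz : forall x, compl E x = 0.
    move=> x; apply: NNPP => hx; apply: hn; exists x; move=> ex; apply: hx.
    by rewrite /compl ex subrr.
  have : opnorm ip (compl E) <= 0.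
    by apply: opnorm_le => //; [exact: linop_compl|] => x; rewrite hz sqn0 expr0n mul0r.
  lra.
case=> hp [[x hx] [x' hx']].
have hb : opnorm ip (AAc E) <= 0.
  apply: opnorm_le => //; first exact: linop_opmul L (linop_compl L).
  by move=> z; rewrite AAcE // hp subrr sqn0 expr0n mul0r.
have A1 : approx_eig E 1 by apply: (eig_approx_eig (y := E x)) => //; rewrite hp rscale1.
have A0 : approx_eig E 0.
  apply: (eig_approx_eig (y := x' - E x')) => //; first by rewrite linopB // hp subrr rscale0.
  by move=> e; apply: hx'; apply/eqP; rewrite eq_sym -subr_eq0 e.
have /andP[_ h1] := approx_eig_le_opnorm hE A1.
have /andP[_ h2] := approx_eig_ge_compl hE A0.
split; lra.
Qed.

Lemma spectral_opnorms_le E F : effect ip E -> effect ip F ->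
  (forall l, approx_eig E l -> approx_eig F l) ->
  [/\ opnorm ip E <= opnorm ip F, opnorm ip (compl E) <= opnorm ip (compl F),
      opnorm ip (AAc E) <= opnorm ip (AAc F) & opnorm ip (compl (AAc E)) <= opnorm ip (compl (AAc F))].
Proof.
move=> hE hF hEF; split.
- by have /andP[_ h] := approx_eig_le_opnorm hF (hEF _ (approx_eig_opnorm hE)).
- by have /andP[_ h] := approx_eig_ge_compl hF (hEF _ (approx_eig_opnorm_compl hE)); move: h; rewrite subKr.
- have [lb [Ab ->]] := opnorm_AAc_attained hE; exact (opnorm_AAc_ge hF (hEF _ Ab)).
- have [lw [Aw ->]] := opnorm_compl_AAc_attained hE; exact (opnorm_compl_AAc_ge hF (hEF _ Aw)).
Qed.

Lemma S2_approx_eig_eq A B : effect ip A -> effect ip B -> (forall l, approx_eig A l <-> approx_eig B l) ->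
  S2 ip B = S2 ip A.
Proof.
move=> hA hB hAB.
have [a1 a2 a3 a4] := spectral_opnorms_le hA hB (fun l => proj1 (hAB l)).
have [b1 b2 b3 b4] := spectral_opnorms_le hB hA (fun l => proj2 (hAB l)).
rewrite !S2E.
have -> : opnorm ip B = opnorm ip A by apply/eqP; rewrite eq_le b1 a1.
have -> : opnorm ip (compl B) = opnorm ip (compl A) by apply/eqP; rewrite eq_le b2 a2.
have -> : opnorm ip (AAc B) = opnorm ip (AAc A) by apply/eqP; rewrite eq_le b3 a3.
have -> : opnorm ip (compl (AAc B)) = opnorm ip (compl (AAc A)) by apply/eqP; rewrite eq_le b4 a4.
by [].
Qed.

Lemma S2_similar A C D : effect ip A -> invertible_bounded ip C D ->
  effect ip (opmul C (opmul A D)) -> S2 ip (opmul C (opmul A D)) = S2 ip A.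
Proof.
move=> hA [bC bD hCD hDC] hB.
have [LC BC] := linop_bndop_of_bounded bC; have [LD BD] := linop_bndop_of_bounded bD.
apply: S2_approx_eig_eq => // l; split.
  apply: (approx_eig_similar (C := C) (D := D)) => //; exact: effect_linop hA.
apply: (approx_eig_similar (C := D) (D := C)) => //; first exact: effect_linop hB.
by move=> x; rewrite /opmul !hDC.
Qed.

Lemma sqn_AAc_sub_le A B d : effect ip A -> effect ip B -> 0 <= d ->
  (forall x, sqn (B x - A x) <= d ^+ 2 * sqn x) ->
  forall x, sqn (AAc B x - AAc A x) <= (d + d) ^+ 2 * sqn x.
Proof.
move=> hA hB hd hx x.
have [/andP[uA0 uA1] /andP[vA0 vA1] _ _ _] := spectral_norms_bounds (effect_spectral_norms hA).
have [/andP[uB0 uB1] /andP[vB0 vB1] _ _ _] := spectral_norms_bounds (effect_spectral_norms hB).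
have LA := effect_linop hA; have LB := effect_linop hB.
have -> : AAc B x - AAc A x = B ((x - B x) - (x - A x)) + (B (x - A x) - A (x - A x)).
  by rewrite /AAc /opmul /compl (linopB (x - B x) (x - A x) LB) addrA subrK.
have hn := sqn_ge0 x.
apply: sqnD_le_sqr => //.
  have h1 := sqn_le_opnorm ((x - B x) - (x - A x)) LB (effect_bndop hB).
  have e1 : sqn ((x - B x) - (x - A x)) = sqn (B x - A x) by have := sqn_compl_sub B A x.
  rewrite e1 in h1; have h2 := hx x; have h3 := sqn_ge0 (B x - A x).
  have h4 : opnorm ip B ^+ 2 <= 1 by nra.
  have h5 : opnorm ip B ^+ 2 * sqn (B x - A x) <= sqn (B x - A x) by nra.
  lra.
have h1 := hx (x - A x).
have h2 := sqn_le_opnorm x (linop_compl LA) (bndop_compl (effect_bndop hA)).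
rewrite /compl in h2.
have h3 : opnorm ip (compl A) ^+ 2 <= 1 by nra.
have h4 := sqn_ge0 (x - A x).
have h5 : sqn (x - A x) <= sqn x by nra.
have h6 : d ^+ 2 * sqn (x - A x) <= d ^+ 2 * sqn x by apply: ler_wpM2l => //; exact: sqr_ge0.
lra.
Qed.

Lemma spectral_opnorms_dist_le A B d : effect ip A -> effect ip B -> 0 <= d ->
  (forall x, sqn (B x - A x) <= d ^+ 2 * sqn x) ->
  [/\ `|opnorm ip B - opnorm ip A| <= d + d,
      `|opnorm ip (compl B) - opnorm ip (compl A)| <= d + d,
      `|opnorm ip (AAc B) - opnorm ip (AAc A)| <= d + d &
      `|opnorm ip (compl (AAc B)) - opnorm ip (compl (AAc A))| <= d + d].
Proof.
move=> hA hB d0 hx.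
have LA := effect_linop hA; have LB := effect_linop hB.
have BA := effect_bndop hA; have BB := effect_bndop hB.
have L1A := linop_opmul LA (linop_compl LA); have L1B := linop_opmul LB (linop_compl LB).
have B1A := bndop_opmul BA (bndop_compl BA); have B1B := bndop_opmul BB (bndop_compl BB).
have dd0 : 0 <= d + d by rewrite addr_ge0.
have h1 := sqn_AAc_sub_le hA hB d0 hx.
have le_dd : d <= d + d by rewrite lerDl.
split.
- exact: le_trans (opnorm_dist_le LB BB LA BA d0 hx) le_dd.
- apply: le_trans le_dd.
  apply: opnorm_dist_le (linop_compl LB) (bndop_compl BB) (linop_compl LA) (bndop_compl BA) d0 _.
  by move=> x; rewrite sqn_compl_sub.
- exact: opnorm_dist_le L1B B1B L1A B1A dd0 h1.
- apply: opnorm_dist_le (linop_compl L1B) (bndop_compl B1B) (linop_compl L1A) (bndop_compl B1A) dd0 _.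
  by move=> x; rewrite sqn_compl_sub; apply: h1.
Qed.

Lemma S2_continuous A : effect ip A -> forall e : R, 0 < e -> exists2 dl : R, 0 < dl &
  forall B, effect ip B -> opnorm ip (opsub B A) < dl -> `|S2 ip B - S2 ip A| < e.
Proof.
move=> hA e he.
have [eta eta0 etaE] := Sval_modulus he.
exists (eta / 2) => [|B hB hd]; first by rewrite divr_gt0.
have LA := effect_linop hA; have LB := effect_linop hB.
have BA := effect_bndop hA; have BB := effect_bndop hB.
set d := opnorm ip (opsub B A) in hd.
have d0 : 0 <= d := opnorm_ge0 (linop_opsub LB LA) (bndop_opsub BB BA).
have hx : forall x, sqn (B x - A x) <= d ^+ 2 * sqn x.
  by move=> x; have := sqn_le_opnorm x (linop_opsub LB LA) (bndop_opsub BB BA).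
have [du dv db dw] := spectral_opnorms_dist_le hA hB d0 hx.
have hdd : d + d <= eta by lra.
rewrite !S2E.
have := Sval_dist_le (effect_spectral_norms hB) (effect_spectral_norms hA) (ltW eta0)
  (le_trans du hdd) (le_trans dv hdd) (le_trans db hdd) (le_trans dw hdd).
lra.
Qed.

Lemma S2_sharpness_nonzero_space :
  (forall A, effect ip A -> Yq ip A <= Xq ip A ^+ 2) /\ sharpness_measure ip (S2 ip).
Proof.
split=> [A hA|].
  by have := Dval_ge0 (effect_spectral_norms hA); rewrite /Dval -YqE -XqE subr_ge0.
split=> [A hA|A hA|A hA|A hA|].
- by rewrite S2E; apply: Sval_in01 (effect_spectral_norms hA).
- rewrite S2E; apply: iff_trans (Sval_eq0 (effect_spectral_norms hA)) _.
  exact: trivial_effect_opnormP.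
- rewrite S2E; apply: iff_trans (Sval_eq1 (effect_spectral_norms hA)) _.
  exact: nontrivial_projection_opnormP.
- exact/S2_compl/effect_linop.
by split=> [A C D|A]; [exact: S2_similar|exact: S2_continuous].
Qed.

End NonzeroSpace.

Lemma opnorm_trivial_space (hz : forall x : H, x = 0) T : opnorm ip T = 0.
Proof.
have S0 : image_ball T 0.
  exists 0; first by rewrite /= hnormE sqn0 sqrtr0 ler01.
  by rewrite (hz (T 0)) hnormE sqn0 sqrtr0.
have ub : ubound (image_ball T) 0 by move=> _ [x _ <-]; rewrite (hz (T x)) hnormE sqn0 sqrtr0.
apply/eqP; rewrite eq_le; apply/andP; split.
  by rewrite opnormE; apply: ge_sup => //; exists 0.
by rewrite opnormE; apply: sup_upper_bound => //; split; [exists 0|exists 0].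
Qed.

Lemma S2_trivial_space (hz : forall x : H, x = 0) A : S2 ip A = 0 /\ Yq ip A <= Xq ip A ^+ 2.
Proof.
rewrite S2E YqE XqE /Sval /Yval /Xval !opnorm_trivial_space //.
split; last by rewrite !mulr0 !subr0 !add0r; lra.
have -> : (2 * 0 * 0 - (0 + 0 - 1)) ^+ 2 - (2 * (0 * 0 - 0) - ((0 + 0 - 1) - (0 + 0 - 1))) = (1 : R) ^+ 2 by ring.
by rewrite sqrtr_sqr ger0_norm //; ring.
Qed.

Lemma S2_sharpness_trivial_space (hz : forall x : H, x = 0) :
  (forall A, effect ip A -> Yq ip A <= Xq ip A ^+ 2) /\ sharpness_measure ip (S2 ip).
Proof.
have Z := S2_trivial_space hz.
split=> [A _|]; first by case: (Z A).
split=> [A _|A _|A _|A _|].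
- by rewrite (proj1 (Z A)) lexx ler01.
- rewrite (proj1 (Z A)); split=> // _.
  by exists 0; rewrite lexx ler01; split=> // x; rewrite (hz (A x)) (hz x) scaler0.
- rewrite (proj1 (Z A)); split=> [/esym/eqP|[_ [[x hx] _]]]; first by rewrite oner_eq0.
  by case: hx; apply: hz.
- by rewrite !(proj1 (Z _)).
split=> [A C D _ _ _|A _ e he]; first by rewrite !(proj1 (Z _)).
by exists 1 => // B _ _; rewrite !(proj1 (Z _)) subrr normr0.
Qed.

End Operators.

Theorem mainTheorem11 (R : realType) (H : lmodType R[i]) (ip : H -> H -> R[i])
  (hH : separable_hilbert ip) :
  (forall A : H -> H, effect ip A -> Yq ip A <= Xq ip A ^+ 2) /\
  sharpness_measure ip (S2 ip).
Proof.
have hip : inner_product ip by case: hH.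
have [[x hx]|hz] := classic (exists x : H, x <> 0).
  exact: S2_sharpness_nonzero_space hip (ex_intro _ x hx).
apply: S2_sharpness_trivial_space hip _ => x.
by apply: NNPP => hx; apply: hz; exists x.
Qed.
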